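(* Let $D$ be a collection of $10$ points of $\mathbb{CP}^1$ counted with multiplicities (i.e. an effective divisor of degree $10$ on $\mathbb{CP}^1$) whose support consists of at least $3$ distinct points, and let $T$ be the group of Möbius transformations of $\mathbb{CP}^1$ that map $D$ to itself (preserving multiplicities). Then $|T| \leq 24$. *)

(* The complex numbers are modelled as R[i] = complex R for
   an arbitrary R : realType (a complete archimedean ordered field, i.e. the
   real numbers); the projective line CP^1 as option R[i] with None = oo. *)
From HB Require Import structures.
From mathcomp Require Import all_boot all_order all_algebra.
From mathcomp Require Import reals.
From mathcomp.real_closed Require Import complex.
Set Implicit Arguments. Unset Strict Implicit. Unset Printing Implicit Defensive.
Import Order.TTheory GRing.Theory Num.Theory.
Local Open Scope ring_scope.

Definition P1 (C : Type) := option C.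

Definition mobius_fun (C : fieldType) (a b c d : C) (z : P1 C) : P1 C :=
  match z with
  | None => if c == 0 then None else Some (a / c)
  | Some x => if c * x + d == 0 then None
              else Some ((a * x + b) / (c * x + d))
  end.

Definition is_mobius (C : fieldType) (f : P1 C -> P1 C) : Prop :=
  exists a b c d : C, a * d - b * c != 0 /\ forall z, f z = mobius_fun a b c d z.

(* An effective divisor on P^1 is represented by the multiset (seq) of its
   points counted with multiplicity; its degree is the size of the seq,
   the multiplicity of x is count_mem x D, its support is undup D. *)
Definition preserves_divisor (C : fieldType) (D : seq (P1 C))
    (f : P1 C -> P1 C) : Prop :=
  forall x : P1 C, count_mem (f x) D = count_mem x D.

From HB Require Import structures.
From mathcomp Require Import all_boot all_order all_algebra all_fingroup.
From mathcomp Require Import reals.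
From mathcomp.real_closed Require Import complex.
From mathcomp Require Import ring zify boolp.
From Stdlib Require Import ClassicalEpsilon.
Set Implicit Arguments. Unset Strict Implicit. Unset Printing Implicit Defensive.
Import Order.TTheory GRing.Theory Num.Theory.

(* The Moebius maps preserving D act faithfully on the support S of D (a Moebius
   map fixing three points is the identity), so they form a finite group G of
   permutations of S.  A non-identity element of G has finite order, hence is
   not parabolic, and thus has exactly two fixed points on P^1.  Burnside's
   lemma on the finite G-set made of S and all these fixed points gives the
   Riemann-Hurwitz relation  sum_O (|G| - |O|) = 2 |G| - 2  over the orbits O,
   in which every nonzero term is at least |G|/2.  If |G| >= 25, the invariant
   set S of 3 to 10 points must be a single orbit, there are exactly two other
   orbits with nontrivial stabilisers, and the three orbit sizes k1 + k2 + k3 =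
   |G| + 2, all dividing |G| and with 3 <= k1 <= 10, admit no solution. *)

Lemma orbit_sizes_le24 N k1 k2 k3 : 3 <= k1 <= 10 -> k1 + k2 + k3 = N + 2 ->
  k1 %| N -> k2 %| N -> k3 %| N -> k2 < N -> k3 < N -> N <= 24.
Proof.
have part k n m : N = n * k -> m <= n -> m * k <= N by move=> -> mn; rewrite leq_mul2r mn orbT.
move=> k1b sumk /dvdnP[n1 e1] /dvdnP[n2 e2] /dvdnP[n3 e3] k2N k3N.
rewrite leqNgt; apply/negP => N25.
have {k2N} n2b : 2 <= n2 by case: n2 e2 k2N => [|[|]] // ->; rewrite ?mul0n ?mul1n ?ltnn.
have {k3N} n3b : 2 <= n3 by case: n3 e3 k3N => [|[|]] // ->; rewrite ?mul0n ?mul1n ?ltnn.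
(* In terms of the stabiliser orders n_i the relation reads 1/n1 + 1/n2 + 1/n3 = 1 + 2/N,
   which forces n2 = 2 or n3 = 2 and then leaves finitely many cases. *)
wlog n2e : k2 k3 n2 n3 sumk e2 e3 n2b n3b / n2 = 2.
  move=> wl; have [n2_2|n2_3] := leqP n2 2; first by apply: (wl k2 k3 n2 n3) => //; lia.
  have [n3_2|n3_3] := leqP n3 2; first by apply: (wl k3 k2 n3 n2) => //; lia.
  by have := part _ _ 3 e2 n2_3; have := part _ _ 3 e3 n3_3; lia.
subst n2; have [n3_2|n3_3] := leqP n3 2; first by have n3e : n3 = 2 by [lia]; subst n3; lia.
have n1_3 : 3 <= n1 by case: (leqP 3 n1) => // n1_2; nia.
have n1_5 : n1 <= 5.
  by case: (leqP n1 5) => // n1_6; have := part _ _ 6 e1 n1_6; have := part _ _ 3 e3 n3_3; lia.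
have n3_5 : n3 <= 5.
  by case: (leqP n3 5) => // n3_6; have := part _ _ 6 e3 n3_6; have := part _ _ 3 e1 n1_3; lia.
clear n3b.
by case: n1 n1_3 n1_5 e1 => [|[|[|[|[|[|]]]]]] // _ _ e1;
   case: n3 n3_3 n3_5 e3 => [|[|[|[|[|[|]]]]]] // _ _ e3; lia.
Qed.

Section OrbitDefects.
Variables (aT : finGroupType) (G : {group aT}) (X : finType) (to : action G X).

Let orbits := orbit to G @: [set: X].

Lemma acts_setT : [acts G, on [set: X] | to].
Proof. by apply/subsetP => a Ga; rewrite !inE Ga; apply/subsetP => x; rewrite !inE. Qed.

Lemma card_orbit_dvd x : #|orbit to G x| %| #|G|.
Proof. by rewrite -(card_orbit_in_stab to x (subxx G)) dvdn_mulr. Qed.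

Lemma card_orbit_le x : #|orbit to G x| <= #|G|.
Proof. exact: dvdn_leq (cardG_gt0 G) (card_orbit_dvd x). Qed.

Lemma orbit_defect_ge x :
  #|orbit to G x| < #|G| -> #|G| <= 2 * (#|G| - #|orbit to G x|).
Proof.
case/dvdnP: (card_orbit_dvd x) => [[|[|s]] ->]; rewrite ?mul0n ?mul1n ?ltnn //.
move: #|orbit to G x| => k _; nia.
Qed.

Lemma sum_orbit_defect_dichotomy (Q : {set {set X}}) : Q \subset orbits ->
  \sum_(O in Q) (#|G| - #|O|) = 0 \/ #|G| <= 2 * \sum_(O in Q) (#|G| - #|O|).
Proof.
move=> /subsetP Qorb; apply: (big_ind (fun s => s = 0 \/ #|G| <= 2 * s)); [by left | lia |].
move=> O /Qorb /imsetP[x _ ->]; have [/orbit_defect_ge|] := ltnP #|orbit to G x| #|G|.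
  by right.
by rewrite -subn_eq0 => /eqP; left.
Qed.

Lemma sum_orbit_defect :
  \sum_(O in orbits) (#|G| - #|O|) = \sum_(a in (G^#)%g) #|'Fix_to[a]%g|.
Proof.
apply/eqP; rewrite -(eqn_add2r (\sum_(O in orbits) #|O|)) -big_split /=.
rewrite (eq_bigr (fun=> #|G|)) => [|_ /imsetP[x _ ->]]; last by rewrite subnK ?card_orbit_le.
rewrite sum_nat_const acts_sum_card_orbit ?acts_setT // -(Frobenius_Cauchy acts_setT).
rewrite (big_setD1 1%g) //= (eq_bigr (fun a => #|'Fix_to[a]%g|)) => [|a _]; last by rewrite setTI.
have fix1 : ('Fix_to[1] = [set: X])%g := afix1 to.
by rewrite setTI fix1 addnC.
Qed.

Hypothesis fix2 : forall a, a \in (G^#)%g -> #|'Fix_to[a]%g| = 2.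

Lemma sum_orbit_defect2 : \sum_(O in orbits) (#|G| - #|O|) = 2 * (#|G| - 1).
Proof.
rewrite sum_orbit_defect (eq_bigr _ fix2) sum_nat_const (cardsD1 1%g G) group1.
by rewrite add1n subn1 mulnC.
Qed.

Lemma acts_small_orbit (S : {set X}) : [acts G, on S | to] -> 3 <= #|S| ->
  2 * #|S| < #|G| + 4 -> exists2 x, x \in S & orbit to G x = S.
Proof.
move=> actsS S3 Ssmall; set QS := orbit to G @: S.
have QSorb : QS \subset orbits by apply: imsetS; apply: subsetT.
have sumQS : \sum_(O in QS) (#|G| - #|O|) + #|S| = #|QS| * #|G|.
  rewrite -(acts_sum_card_orbit actsS) -big_split -sum_nat_const /=.
  by apply: eq_bigr => _ /imsetP[x _ ->]; rewrite subnK ?card_orbit_le.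
have [x Sx] : exists x, x \in S by apply/card_gt0P; lia.
have QS0 : 0 < #|QS| by apply/card_gt0P; exists (orbit to G x); apply: imset_f.
have := sum_orbit_defect_dichotomy (subsetDl orbits QS).
have := sum_orbit_defect2; rewrite (big_setID QS) (setIidPr QSorb) /=.
move: (\sum_(O in QS) _) (\sum_(O in orbits :\: QS) _) sumQS => dS dR sumQS sum_all dR_dich.
have /cards1P[O1 QSE] : #|QS| == 1.
  move: #|QS| #|G| #|S| QS0 S3 Ssmall sumQS sum_all dR_dich => m N k m0 *.
  have [m1|m2] := leqP m 1; first by apply/eqP; lia.
  have : 2 * N <= m * N by rewrite leq_mul2r m2 orbT.
  have [m2e|m3] := eqVneq m 2; first by subst m; lia.
  have : 3 * N <= m * N by rewrite leq_mul2r; lia.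
  lia.
have /imsetP[x1 Sx1 O1E] : O1 \in QS by rewrite QSE set11.
exists x1 => //; apply/eqP; rewrite eqEcard; apply/andP; split.
  by apply/subsetP => y /acts_in_orbit; apply.
by rewrite -(acts_sum_card_orbit actsS) -/QS QSE big_set1 O1E.
Qed.

Lemma small_orbit_card_le24 x : 3 <= #|orbit to G x| <= 10 -> #|G| <= 24.
Proof.
move=> kb; rewrite leqNgt; apply/negP => G25.
set E := (orbits :\ orbit to G x) :&: [set O : {set X} | #|O| < #|G|].
have Eorb O : O \in E -> exists2 y, O = orbit to G y & #|O| < #|G|.
  by case/setIP => /setD1P[_ /imsetP[y _ ->]]; rewrite inE; exists y.
have sumE : #|G| - #|orbit to G x| + \sum_(O in E) (#|G| - #|O|) = 2 * (#|G| - 1).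
  rewrite -sum_orbit_defect2 (big_setD1 _ (imset_f _ (in_setT x))) /=.
  rewrite [in RHS](big_setID [set O : {set X} | #|O| < #|G|]) [X in _ + (_ + X)]big1 ?addn0 //.
  by move=> O /setDP[_]; rewrite inE -leqNgt -subn_eq0 => /eqP.
have E_lb : #|E| * #|G| <= 2 * \sum_(O in E) (#|G| - #|O|).
  rewrite -sum_nat_const big_distrr /=; apply: leq_sum => O /Eorb[y -> ?].
  exact: orbit_defect_ge.
have E_ub : \sum_(O in E) (#|G| - #|O|) <= #|E| * (#|G| - 1).
  rewrite -sum_nat_const; apply: leq_sum => O /Eorb[y -> _].
  by rewrite leq_sub2l // card_gt0; apply/set0Pn; exists y; apply: orbit_refl.
have /cards2P[O2 [O3 [O23 E23]]] : #|E| == 2.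
  move: #|E| #|G| #|orbit to G x| (\sum_(O in E) _) kb G25 sumE E_lb E_ub => e N k s kb *.
  by apply/eqP; nia.
have [[y2 O2E O2N] [y3 O3E O3N]] : (exists2 y, O2 = orbit to G y & #|O2| < #|G|) /\
                                  (exists2 y, O3 = orbit to G y & #|O3| < #|G|).
  by split; apply: Eorb; rewrite E23 !inE eqxx ?orbT.
have sumk : #|orbit to G x| + #|O2| + #|O3| = #|G| + 2.
  move: sumE O2N O3N (card_orbit_le x); rewrite E23 big_setU1 ?inE //= big_set1.
  by move: #|G| => N; lia.
have := orbit_sizes_le24 kb sumk (card_orbit_dvd x) _ _ O2N O3N.
by rewrite O2E O3E !card_orbit_dvd leqNgt G25 => /(_ isT isT).
Qed.

Lemma invariant_set_card_le24 (S : {set X}) :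
  [acts G, on S | to] -> 3 <= #|S| <= 10 -> #|G| <= 24.
Proof.
move=> actsS /andP[S3 S10]; rewrite leqNgt; apply/negP => G25.
have [|x _ xS] := acts_small_orbit actsS S3; first by move: #|G| G25 => N; lia.
by move: G25; rewrite ltnNge (small_orbit_card_le24 (x := x)) // xS S3.
Qed.

End OrbitDefects.

Local Open Scope ring_scope.

Lemma poly_eq0_of_roots (R : idomainType) n (E : nat -> R) (xs : seq R) :
  uniq xs -> (n <= size xs)%N -> {in xs, forall x, \sum_(i < n) E i * x ^+ i = 0} ->
  forall i, (i < n)%N -> E i = 0.
Proof.
move=> uxs nxs xs0 i lt_in; suff P0 : \poly_(i < n) E i = 0.
  by have := coef_poly n E i; rewrite P0 coef0 lt_in.
apply: contraTeq nxs => nzP; rewrite -ltnNge; apply: (leq_trans _ (size_poly n E)).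
apply: max_poly_roots nzP _ uxs.
by apply/allP => x /xs0; rewrite /root horner_poly => ->.
Qed.

Section Mat2.
Variable F : fieldType.

Record mat2 := Mat2 { ma : F; mb : F; mc : F; md : F }.

Definition det2 M := ma M * md M - mb M * mc M.
Definition mul2 M N := Mat2 (ma M * ma N + mb M * mc N) (ma M * mb N + mb M * md N)
                            (mc M * ma N + md M * mc N) (mc M * mb N + md M * md N).
Definition scalar2 k := Mat2 k 0 0 k.
Definition adj2 M := Mat2 (md M) (- mb M) (- mc M) (ma M).
Definition exp2 M n := iter n (mul2 M) (scalar2 1).
Definition is_scalar2 M := [&& mb M == 0, mc M == 0 & ma M == md M].

Definition mob M : P1 F -> P1 F := mobius_fun (ma M) (mb M) (mc M) (md M).

Lemma det2M M N : det2 (mul2 M N) = det2 M * det2 N.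
Proof. by case: M N => a b c d [a' b' c' d']; rewrite /det2 /=; ring. Qed.

Lemma det2_exp M n : det2 (exp2 M n) = det2 M ^+ n.
Proof.
elim: n => [|n IH]; first by rewrite /det2 /= mulr1 mulr0 subr0.
by rewrite /exp2 iterS -/(exp2 M n) det2M IH exprS.
Qed.

Lemma mul2_adj M : mul2 (adj2 M) M = scalar2 (det2 M).
Proof. by case: M => a b c d; rewrite /mul2 /scalar2 /det2 /=; congr Mat2; ring. Qed.

Lemma mul2_adjr M : mul2 M (adj2 M) = scalar2 (det2 M).
Proof. by case: M => a b c d; rewrite /mul2 /scalar2 /det2 /=; congr Mat2; ring. Qed.

Lemma det2_adj M : det2 (adj2 M) = det2 M.
Proof. by case: M => a b c d; rewrite /det2 /=; ring. Qed.

Definition of_hom (w : F * F) : P1 F := if w.2 == 0 then None else Some (w.1 / w.2).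
Definition to_hom (z : P1 F) : F * F := if z is Some x then (x, 1) else (1, 0).
Definition nzv (w : F * F) := (w.1 != 0) || (w.2 != 0).
Definition mul2v M (w : F * F) := (ma M * w.1 + mb M * w.2, mc M * w.1 + md M * w.2).

Lemma to_homK : cancel to_hom of_hom.
Proof. by case=> [x|]; rewrite /of_hom /= ?oner_eq0 ?divr1 ?eqxx. Qed.

Lemma nzv_to_hom z : nzv (to_hom z).
Proof. by case: z => [x|]; rewrite /nzv /= oner_eq0 ?orbT. Qed.

Lemma mul2vA M N w : mul2v (mul2 M N) w = mul2v M (mul2v N w).
Proof.
by case: M N => a b c d [a' b' c' d']; case: w => u v; rewrite /mul2v /=; congr pair; ring.
Qed.

Lemma nzv_mul2v M w : det2 M != 0 -> nzv w -> nzv (mul2v M w).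
Proof.
move=> dM; apply: contraTT; rewrite /nzv !negb_or !negbK => /andP[/eqP Mw1 /eqP Mw2].
have: mul2v (adj2 M) (mul2v M w) = (det2 M * w.1, det2 M * w.2).
  by rewrite -mul2vA mul2_adj /mul2v /=; congr pair; ring.
rewrite [mul2v M w]surjective_pairing Mw1 Mw2 /mul2v /= !mulr0 !addr0.
by case=> /esym/eqP + /esym/eqP; rewrite !mulf_eq0 (negbTE dM) /= => -> ->.
Qed.

Lemma mob_of_hom M w : nzv w -> mob M (of_hom w) = of_hom (mul2v M w).
Proof.
case: M => a b c d; case: w => u v; rewrite /nzv /mob /of_hom /mul2v /=.
have [->|v0] := eqVneq v 0; rewrite ?eqxx /= ?orbF => hu.
  rewrite !mulr0 !addr0 mulf_eq0 (negbTE hu) orbF.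
  by case: eqP => // /eqP c0; congr Some; field; rewrite hu c0.
rewrite ?(negbTE v0) /= (_ : c * (u / v) + d = (c * u + d * v) / v); last by field.
rewrite mulf_eq0 invr_eq0 (negbTE v0) orbF.
by case: eqP => // /eqP h; congr Some; field; rewrite h v0.
Qed.

Lemma of_hom_eq w w' : nzv w -> nzv w' ->
  (of_hom w == of_hom w') = (w.1 * w'.2 == w.2 * w'.1).
Proof.
case: w w' => u v [u' v']; rewrite /nzv /of_hom /=.
have [->|v0] := eqVneq v 0; have [->|v0'] := eqVneq v' 0;
  rewrite ?eqxx ?(negbTE v0) ?(negbTE v0') /= ?mulr0 ?mul0r ?eqxx ?orbF // => h h'.
- by rewrite eq_sym mulf_eq0 (negbTE h) (negbTE v0').
- by rewrite [0 == _]eq_sym mulf_eq0 (negbTE h') (negbTE v0).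
apply/eqP/eqP => [[/eqP]|e]; first by rewrite eqr_div // [v * u']mulrC => /eqP.
by congr Some; apply/eqP; rewrite eqr_div // e mulrC.
Qed.

Lemma mobM M N z : det2 N != 0 -> mob (mul2 M N) z = mob M (mob N z).
Proof.
move=> dN; rewrite -(to_homK z) !mob_of_hom ?nzv_mul2v ?nzv_to_hom //.
by rewrite mul2vA.
Qed.

Lemma mob_is_scalar2 M z : det2 M != 0 -> is_scalar2 M -> mob M z = z.
Proof.
case: M => a b c d; rewrite /det2 /is_scalar2 /mob /= => dM /and3P[/eqP b0 /eqP c0 /eqP ad].
move: dM; rewrite b0 c0 ad mulr0 subr0 mulf_eq0 orbb => d0.
by case: z => [x|]; rewrite /= ?eqxx // mul0r add0r (negbTE d0) addr0 mulrC mulKf.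
Qed.

Lemma is_scalar2_scalar k : is_scalar2 (scalar2 k).
Proof. by rewrite /is_scalar2 /= !eqxx. Qed.

Lemma mob_scalar2 k z : k != 0 -> mob (scalar2 k) z = z.
Proof.
by move=> k0; rewrite mob_is_scalar2 ?is_scalar2_scalar // /det2 /= mulr0 subr0 mulf_neq0.
Qed.

Lemma mobK M : det2 M != 0 -> cancel (mob M) (mob (adj2 M)).
Proof. by move=> dM z; rewrite -mobM // mul2_adj mob_scalar2. Qed.

Lemma mobKV M : det2 M != 0 -> cancel (mob (adj2 M)) (mob M).
Proof. by move=> dM z; rewrite -mobM ?det2_adj // mul2_adjr mob_scalar2. Qed.

Lemma mob_exp2 M n z : det2 M != 0 -> mob (exp2 M n) z = iter n (mob M) z.
Proof.
move=> dM; elim: n => [|n IH]; first by rewrite mob_scalar2 ?oner_eq0.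
by rewrite /exp2 iterS mobM -/(exp2 M n) ?IH // det2_exp expf_neq0.
Qed.

Definition qform (p q r : F) (w : F * F) := p * w.1 ^+ 2 + q * w.1 * w.2 + r * w.2 ^+ 2.

Definition fixform M := qform (mc M) (md M - ma M) (- mb M).

Lemma mob_fixE M z : det2 M != 0 -> (mob M z == z) = (fixform M (to_hom z) == 0).
Proof.
move=> dM; rewrite -{1 2}(to_homK z) mob_of_hom ?nzv_to_hom //.
rewrite of_hom_eq ?nzv_mul2v ?nzv_to_hom // -subr_eq0 -oppr_eq0; congr (_ == 0).
by rewrite /fixform /qform /mul2v /=; ring.
Qed.

Lemma qform_eq0 p q r (zs : seq (P1 F)) : uniq zs -> (3 <= size zs)%N ->
  {in zs, forall z, qform p q r (to_hom z) = 0} -> [/\ p = 0, q = 0 & r = 0].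
Proof.
move=> uzs zs3 zs0; set xs := pmap id zs; set E := nth 0 [:: r; q; p].
have uxs : uniq xs by apply: (pmap_uniq (g := Some)) uzs => -[].
have size_xs : (size xs + (None \in zs))%N = size zs.
  rewrite -(count_uniq_mem _ uzs) size_pmap -[RHS](count_predC (fun z => isSome z)).
  by congr addn; apply: eq_count => -[].
have xs0 x : x \in xs -> \sum_(i < 2) E i * x ^+ i + p * x ^+ 2 = 0.
  rewrite mem_pmap map_id => /zs0 qx; rewrite -[RHS]qx /qform /E !big_ord_recl big_ord0 /=.
  by ring.
(* At oo the form is p; at finite points it is the polynomial r + q x + p x^2. *)
have [Nzs | Nzs] := boolP (None \in zs).
  have p0 : p = 0 by rewrite -[RHS](zs0 _ Nzs) /qform /=; ring.
  have E0 : forall i, (i < 2)%N -> E i = 0.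
    apply: (poly_eq0_of_roots uxs) => [|x /xs0]; last by rewrite p0 mul0r addr0.
    by move: size_xs zs3; rewrite Nzs addn1 => <-.
  by split; [| exact: E0 1 isT | exact: E0 0 isT].
have E0 : forall i, (i < 3)%N -> E i = 0.
  apply: (poly_eq0_of_roots uxs) => [|x /xs0 x0]; last by rewrite big_ord_recr; apply: x0.
  by move: size_xs zs3; rewrite (negbTE Nzs) addn0 => ->.
by split; [exact: E0 2 isT | exact: E0 1 isT | exact: E0 0 isT].
Qed.

Lemma mob_fix_scalar M (zs : seq (P1 F)) : det2 M != 0 -> uniq zs ->
  (3 <= size zs)%N -> {in zs, forall z, mob M z = z} -> is_scalar2 M.
Proof.
move=> dM uzs zs3 fixzs.
have /qform_eq0[] // : {in zs, forall z, fixform M (to_hom z) = 0}.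
  by move=> z /fixzs /eqP; rewrite mob_fixE // => /eqP.
move=> /eqP c0 /eqP da /eqP b0.
by rewrite /is_scalar2 c0 -oppr_eq0 b0 eq_sym -subr_eq0 da.
Qed.

Definition disc2 M := (md M - ma M) ^+ 2 + 4 * mb M * mc M.

Lemma exp2_unipotent l n b c k : n ^+ 2 + b * c = 0 ->
  exp2 (Mat2 (l + n) b c (l - n)) k.+1 =
  Mat2 (l ^+ k.+1 + k.+1%:R * l ^+ k * n) (k.+1%:R * l ^+ k * b)
       (k.+1%:R * l ^+ k * c) (l ^+ k.+1 - k.+1%:R * l ^+ k * n).
Proof.
move=> nil; elim: k => [|k IH]; first by rewrite /exp2 /mul2 /=; congr Mat2; ring.
rewrite /exp2 iterS -/(exp2 _ k.+1) IH /mul2 /=; congr Mat2; rewrite !exprS.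
- apply/eqP; rewrite -subr_eq0; apply/eqP.
  by transitivity (k.+1%:R * l ^+ k * (n ^+ 2 + b * c)); [ring | rewrite nil mulr0].
- ring.
- ring.
- apply/eqP; rewrite -subr_eq0; apply/eqP.
  by transitivity (k.+1%:R * l ^+ k * (n ^+ 2 + b * c)); [ring | rewrite nil mulr0].
Qed.

End Mat2.

Lemma exp2_scalar_parabolic (F : fieldType) (F0 : has_pchar0 F) (M : mat2 F) k :
  det2 M != 0 -> disc2 M = 0 ->
  is_scalar2 (exp2 M k.+1) -> is_scalar2 M.
Proof.
case: M => a b c d; rewrite /det2 /disc2; cbn [ma mb mc md] => dM discM.
have nat0 m : (m.+1%:R : F) != 0 by rewrite (pcharf0P F).1.
set l := (a + d) / 2; set n := (a - d) / 2.
have nil : n ^+ 2 + b * c = 0.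
  rewrite -(mul0r 4^-1) -discM /n; field; by rewrite (nat0 3) (nat0 1).
have l0 : l != 0.
  apply: contra dM => /eqP l0; rewrite (_ : a * d - b * c = l ^+ 2 - (n ^+ 2 + b * c)).
    by rewrite l0 nil expr0n subrr.
  by rewrite /l /n; field; rewrite (nat0 1).
have -> : Mat2 a b c d = Mat2 (l + n) b c (l - n).
  by congr Mat2; rewrite /l /n; field; rewrite (nat0 1).
rewrite exp2_unipotent // /is_scalar2 /= => /and3P[Eb Ec /eqP En].
have lk0 : l ^+ k != 0 := expf_neq0 k l0.
move: Eb Ec; rewrite !mulf_eq0 (negbTE (nat0 k)) (negbTE lk0) /= => -> -> /=.
have : 2 * (k.+1%:R * l ^+ k) * n =
       (l ^+ k.+1 + k.+1%:R * l ^+ k * n) - (l ^+ k.+1 - k.+1%:R * l ^+ k * n) by ring.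
have K0 : 2 * (k.+1%:R * l ^+ k) != 0 by rewrite !mulf_neq0 ?nat0.
by rewrite En subrr => /eqP; rewrite mulf_eq0 (negbTE K0) => /eqP->; rewrite addr0 subr0.
Qed.

Section QuadraticRoots.
Variable C : numClosedFieldType.

Definition qroots (p q r : C) : seq (P1 C) :=
  let t := sqrtC (q ^+ 2 - 4 * p * r) in
  if p == 0 then [:: None; Some (- r / q)]
  else [:: Some ((- q + t) / (2 * p)); Some ((- q - t) / (2 * p))].

Lemma size_qroots p q r : size (qroots p q r) = 2.
Proof. by rewrite /qroots; case: ifP. Qed.

Lemma qrootsP p q r : q ^+ 2 - 4 * p * r != 0 ->
  uniq (qroots p q r) /\ forall z, (qform p q r (to_hom z) == 0) = (z \in qroots p q r).
Proof.
rewrite /qroots; set t := sqrtC _ => disc0.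
have t2 : t ^+ 2 = q ^+ 2 - 4 * p * r by rewrite sqrtCK.
have t0 : t != 0 by apply: contraNneq disc0 => t0; rewrite -t2 t0 expr0n.
have [p0|p0] := eqVneq p 0.
  have q0 : q != 0 by apply: contraNneq disc0 => ->; rewrite p0 expr0n /= !mulr0 mul0r subr0.
  split => // -[x|]; rewrite /qform !inE /= p0; last first.
    by rewrite mul0r mulr0 expr0n /= mulr0 !addr0 eqxx.
  rewrite mul0r add0r mulr1 expr1n mulr1; apply/eqP/eqP => [qx|[->]]; last by field.
  congr Some; apply: (mulfI q0); transitivity (- r); last by field.
  by apply/eqP; rewrite -addr_eq0 qx.
set x1 := (- q + t) / (2 * p); set x2 := (- q - t) / (2 * p).
have x12 : x1 != x2.
  apply: contra t0 => /eqP e; have : x1 - x2 = 0 by rewrite e subrr.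
  rewrite /x1 /x2 (_ : (- q + t) / (2 * p) - (- q - t) / (2 * p) = t / p); last by field.
  by move/eqP; rewrite mulf_eq0 invr_eq0 (negbTE p0) orbF.
split=> [|[x|]]; first by rewrite /= inE andbT; apply: contra x12 => /eqP[->].
  have -> : qform p q r (to_hom (Some x)) = p * (x - x1) * (x - x2).
    rewrite /qform /x1 /x2 /=; apply/eqP; rewrite -subr_eq0; apply/eqP.
    by transitivity ((t ^+ 2 - (q ^+ 2 - 4 * p * r)) / (4 * p)); [field | rewrite t2 subrr mul0r].
  by rewrite !mulf_eq0 (negbTE p0) !subr_eq0 !inE.
by rewrite /qform !inE /= expr1n mulr1 mulr0 !expr0n /= mulr0 !addr0 (negbTE p0).
Qed.

End QuadraticRoots.

Section DivisorAutomorphisms.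
Variables (C : numClosedFieldType) (D : seq (P1 C)).
Hypothesis supp3 : (3 <= size (undup D))%N.

Definition aut_mx (M : mat2 C) := det2 M != 0 /\ preserves_divisor D (mob M).

Lemma mem_undup_preserves f z : preserves_divisor D f -> (f z \in undup D) = (z \in undup D).
Proof. by move=> fD; rewrite !mem_undup -!has_pred1 !has_count fD. Qed.

Lemma aut_mx1 : aut_mx (scalar2 1).
Proof.
by split=> [|z]; rewrite ?mob_scalar2 ?oner_eq0 // /det2 /= mulr1 mulr0 subr0 oner_eq0.
Qed.

Lemma aut_mxM M N : aut_mx M -> aut_mx N -> aut_mx (mul2 M N).
Proof.
case=> dM DM [dN DN]; split=> [|z]; first by rewrite det2M mulf_neq0.
by rewrite mobM // DM DN.
Qed.

Definition supp := seq_sub (undup D).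

(* The identity permutation is a junk value, used only when f does not induce
   an injection of the support into itself. *)
Definition perm_supp (f : P1 C -> P1 C) : {perm supp} :=
  if injectiveP (fun x : supp => insubd x (f (val x))) is ReflectT f_inj then perm f_inj else 1%g.

Lemma perm_suppE f x : {in undup D, forall z, f z \in undup D} ->
  {in undup D &, injective f} -> val (perm_supp f x) = f (val x).
Proof.
move=> fS f_inj; have fSE y : val (insubd y (f (val y)) : supp) = f (val y).
  by rewrite val_insubd fS ?(valP y).
rewrite /perm_supp; case: injectiveP => [inj|ninj]; first by rewrite permE fSE.
by case: ninj => y z /(congr1 val); rewrite !fSE => /f_inj => /(_ (valP y) (valP z))/val_inj.
Qed.

Lemma perm_supp_mobE M x : aut_mx M -> val (perm_supp (mob M) x) = mob M (val x).
Proof.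
case=> dM DM; apply: perm_suppE => [z|]; first by rewrite (mem_undup_preserves z DM).
exact: in2W (can_inj (mobK dM)).
Qed.

Lemma perm_supp_mobM M N : aut_mx M -> aut_mx N ->
  perm_supp (mob (mul2 M N)) = (perm_supp (mob N) * perm_supp (mob M))%g.
Proof.
move=> aM aN; apply/permP => x; apply: val_inj.
rewrite permM !perm_supp_mobE //; last exact: aut_mxM.
by apply: mobM; case: aN.
Qed.

Lemma perm_supp_mob_scalar M : aut_mx M -> is_scalar2 M -> perm_supp (mob M) = 1%g.
Proof.
move=> aM sM; apply/permP => x; apply: val_inj.
by rewrite perm_supp_mobE // perm1 mob_is_scalar2 //; case: aM.
Qed.

Lemma perm_supp_mob_inj M N : aut_mx M -> aut_mx N ->
  perm_supp (mob M) = perm_supp (mob N) -> mob M =1 mob N.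
Proof.
move=> aM aN eMN; have [[dM _] [dN _]] := (aM, aN).
have dNM : det2 (mul2 (adj2 N) M) != 0 by rewrite det2M det2_adj mulf_neq0.
have : is_scalar2 (mul2 (adj2 N) M).
  apply: (mob_fix_scalar dNM (undup_uniq D) supp3) => z Sz.
  have := perm_supp_mobE (SeqSub Sz) aM; rewrite eMN perm_supp_mobE //= => NzMz.
  by rewrite mobM // -NzMz mobK.
by move=> sNM z; rewrite -[LHS](mobKV dN) -(mobM (adj2 N)) // (mob_is_scalar2 z dNM sNM).
Qed.

Definition aut_group : {set {perm supp}} :=
  [set p | `[< exists2 M, aut_mx M & perm_supp (mob M) = p >]].

Lemma aut_groupP p :
  reflect (exists2 M, aut_mx M & perm_supp (mob M) = p) (p \in aut_group).
Proof. by rewrite inE; apply: asboolP. Qed.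

Lemma group_set_aut_group : group_set aut_group.
Proof.
apply/group_setP; split.
  apply/aut_groupP; exists (scalar2 1); first exact: aut_mx1.
  by apply: perm_supp_mob_scalar; [exact: aut_mx1 | exact: is_scalar2_scalar].
move=> p q /aut_groupP[M aM <-] /aut_groupP[N aN <-]; apply/aut_groupP.
by exists (mul2 N M); [apply: aut_mxM | rewrite perm_supp_mobM].
Qed.

Canonical aut_group_group := Group group_set_aut_group.

(* A matrix inducing p; arbitrary when p is not in aut_group. *)
Definition mx_of (p : {perm supp}) : mat2 C :=
  epsilon (inhabits (scalar2 1)) (fun M => aut_mx M /\ perm_supp (mob M) = p).

Lemma mx_ofP p : p \in aut_group -> aut_mx (mx_of p) /\ perm_supp (mob (mx_of p)) = p.
Proof.
case/aut_groupP => M aM pM.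
by apply: (@epsilon_spec _ _ (fun M => aut_mx M /\ perm_supp (mob M) = p)); exists M.
Qed.

Lemma mob_mx_ofM p q : p \in aut_group -> q \in aut_group ->
  mob (mx_of (p * q)%g) =1 mob (mx_of q) \o mob (mx_of p).
Proof.
move=> Gp Gq; have [aP eP] := mx_ofP Gp; have [aQ eQ] := mx_ofP Gq.
have [aPQ ePQ] := mx_ofP (groupM Gp Gq).
move=> z; rewrite /= -mobM; last by case: aP.
by apply: perm_supp_mob_inj => //; [exact: aut_mxM | rewrite perm_supp_mobM // eP eQ].
Qed.

Lemma val_iter_perm_supp M x n : aut_mx M ->
  val (iter n (perm_supp (mob M)) x) = iter n (mob M) (val x).
Proof. by move=> aM; elim: n => //= n <-; rewrite perm_supp_mobE. Qed.

Definition fixpoints (p : {perm supp}) : seq (P1 C) :=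
  let M := mx_of p in qroots (mc M) (md M - ma M) (- mb M).

Lemma size_fixpoints p : size (fixpoints p) = 2.
Proof. exact: size_qroots. Qed.

Lemma fixpointsP p : p \in aut_group^#%g ->
  uniq (fixpoints p) /\ forall z, (mob (mx_of p) z == z) = (z \in fixpoints p).
Proof.
case/setD1P => p1 Gp; have [aM eM] := mx_ofP Gp; have [dM _] := aM.
rewrite /fixpoints; set M := mx_of p in aM eM dM *.
have nsM : ~~ is_scalar2 M by apply: contra p1 => sM; rewrite -eM perm_supp_mob_scalar.
have discM : disc2 M != 0.
  apply: contra nsM => /eqP discM.
  apply: (exp2_scalar_parabolic (pchar_num C) dM discM (k := #[p]%g.-1)).
  apply: (mob_fix_scalar _ (undup_uniq D) supp3) => [|z Sz].
    by rewrite det2_exp expf_neq0.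
  rewrite mob_exp2 // prednK ?order_gt0 //.
  by rewrite -(val_iter_perm_supp (SeqSub Sz)) // eM -permX expg_order perm1.
have [|uniq_roots mem_roots] := @qrootsP _ (mc M) (md M - ma M) (- mb M).
  by rewrite (_ : (md M - ma M) ^+ 2 - 4 * mc M * - mb M = disc2 M) // /disc2; ring.
by split=> // z; rewrite mob_fixE //; apply: mem_roots.
Qed.

Lemma mob_mx_of1 : mob (mx_of 1) =1 id.
Proof.
have [a1 e1] := mx_ofP (group1 aut_group_group).
move=> z; rewrite (perm_supp_mob_inj a1 aut_mx1) ?mob_scalar2 ?oner_eq0 // e1.
by rewrite perm_supp_mob_scalar //; [exact: aut_mx1 | exact: is_scalar2_scalar].
Qed.

Definition fixset : seq (P1 C) :=
  undup D ++ flatten [seq fixpoints p | p <- enum (aut_group^#)%g].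

Lemma fixset_mob p z : p \in aut_group -> z \in fixset -> mob (mx_of p) z \in fixset.
Proof.
move=> Gp; have [[_ DP] _] := mx_ofP Gp; rewrite !mem_cat => /orP[Sz|].
  by rewrite (mem_undup_preserves z DP) Sz.
case/flatten_mapP => r; rewrite mem_enum => G1r rz; apply/orP; right.
have Gr : r \in aut_group by case/setD1P: G1r.
have G1r' : (p^-1 * (r * p))%g \in aut_group^#%g.
  by case/setD1P: G1r => r1 _; rewrite -conjgE; apply/setD1P; rewrite conjg_eq1 groupJ.
apply/flatten_mapP; exists (p^-1 * (r * p))%g; first by rewrite mem_enum.
have [_ <-] := fixpointsP G1r'; have [_ rE] := fixpointsP G1r.
rewrite mob_mx_ofM ?groupV ?groupM //= mob_mx_ofM //=.
have -> : mob (mx_of p^-1) (mob (mx_of p) z) = z.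
  by rewrite -[in RHS](mob_mx_of1 z) -(mulgV p) mob_mx_ofM ?groupV.
by move: rz; rewrite -rE => /eqP->.
Qed.

Definition pts := seq_sub fixset.

Definition act_pts (x : pts) (p : {perm supp}) : pts :=
  if p \in aut_group then insubd x (mob (mx_of p) (val x)) else x.

Lemma act_ptsE x p : p \in aut_group -> val (act_pts x p) = mob (mx_of p) (val x).
Proof. by move=> Gp; rewrite /act_pts Gp val_insubd fixset_mob // (valP x). Qed.

Lemma is_action_pts : is_action aut_group act_pts.
Proof.
split=> [p x y | x p q Gp Gq]; last first.
  by apply: val_inj; rewrite !act_ptsE ?groupM // mob_mx_ofM.
rewrite /act_pts; case: ifP => // Gp /(congr1 val); have [[dP _] _] := mx_ofP Gp.
by rewrite !val_insubd !fixset_mob ?(valP x) ?(valP y) // => /(can_inj (mobK dP))/val_inj.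
Qed.

Canonical pts_action := Action is_action_pts.

Lemma card_pts_of (s : seq (P1 C)) : uniq s -> {subset s <= fixset} ->
  #|[set x : pts | val x \in s]| = size s.
Proof.
move=> us sX; rewrite cardE -(size_map val); apply/perm_size/uniq_perm => //.
  by rewrite map_inj_uniq ?enum_uniq //; exact: val_inj.
move=> z; apply/mapP/idP => [[x] |sz]; first by rewrite mem_enum inE => ? ->.
by exists (SeqSub (sX z sz)); rewrite ?mem_enum ?inE.
Qed.

Lemma card_afix_pts p : p \in aut_group^#%g -> #|'Fix_pts_action[p]%g| = 2.
Proof.
move=> G1p; have [u fixE] := fixpointsP G1p; have Gp : p \in aut_group by case/setD1P: G1p.
rewrite -(size_fixpoints p) -card_pts_of //; last first.
  move=> z zp; rewrite mem_cat; apply/orP; right.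
  by apply/flatten_mapP; exists p; rewrite ?mem_enum.
apply: eq_card => x; rewrite [in RHS]inE -fixE -(act_ptsE x Gp); apply/afix1P/eqP => [-> //|].
exact: val_inj.
Qed.

Definition supp_pts := [set x : pts | val x \in undup D].

Lemma acts_supp_pts : [acts aut_group, on supp_pts | pts_action].
Proof.
apply/subsetP => p Gp; apply/setIP; split => //; rewrite inE; apply/subsetP => x.
rewrite !inE /= act_ptsE //.
by have [[_ DP] _] := mx_ofP Gp; rewrite mem_undup_preserves.
Qed.

Lemma card_aut_group_le24 : (size D <= 10)%N -> (#|aut_group| <= 24)%N.
Proof.
move=> D10; apply: (invariant_set_card_le24 card_afix_pts acts_supp_pts).
rewrite card_pts_of ?undup_uniq // => [|z zS]; last by rewrite mem_cat zS.
by rewrite supp3 (leq_trans (size_undup D)).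
Qed.

Lemma mobius_aut_mx f : is_mobius f -> preserves_divisor D f ->
  exists2 M, aut_mx M & f = mob M.
Proof.
case=> a [b [c [d [dM /funext fE]]]] fD; exists (Mat2 a b c d) => //.
by split=> // z; rewrite /mob /= -fE.
Qed.

Lemma card_mobius_aut_le24 n (T : 'I_n -> P1 C -> P1 C) : (size D <= 10)%N ->
  (forall k, is_mobius (T k) /\ preserves_divisor D (T k)) ->
  (forall k l, T k =1 T l -> k = l) -> (n <= 24)%N.
Proof.
move=> D10 autT injT; apply: leq_trans (card_aut_group_le24 D10).
have mxT k : exists2 M, aut_mx M & T k = mob M by case: (autT k) => /mobius_aut_mx; apply.
have rho_inj : injective (fun k => perm_supp (T k)).
  move=> k l /=; have [M aM TkM] := mxT k; have [N aN TlN] := mxT l.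
  by rewrite TkM TlN => /(perm_supp_mob_inj aM aN) MN; apply: injT => z; rewrite TkM TlN MN.
rewrite -[n]card_ord -(card_imset _ rho_inj).
apply/subset_leq_card/subsetP => _ /imsetP[k _ ->].
by have [M aM ->] := mxT k; apply/aut_groupP; exists M.
Qed.

End DivisorAutomorphisms.

Unset Implicit Arguments.

(* |T| <= 24: any family of pairwise distinct Moebius maps preserving D
   (indexed by 'I_n) has n <= 24; this also encodes finiteness of T. *)
Theorem lemma4p7 (R : realType) (D : seq (P1 R[i]))
  (hdeg : size D = 10%N) (hsupp : (3 <= size (undup D))%N)
  (n : nat) (T : 'I_n -> (P1 R[i] -> P1 R[i]))
  (hT : forall k, is_mobius (T k) /\ preserves_divisor D (T k))
  (hinj : forall k l, (forall z, T k z = T l z) -> k = l) :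
  (n <= 24)%N.
Proof. by apply: (card_mobius_aut_le24 hsupp _ hT hinj); rewrite hdeg. Qed.
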